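(* Let $a,c>0$ and $b,d<0$ be real numbers, and let $W_0(z)=1$, $W_1(z)=z$, $W_n(z)=(az+b)W_{n-1}(z)+(cz+d)W_{n-2}(z)$ for $n\ge2$. Then every polynomial $W_n(z)$, $n\ge0$, is real-rooted if and only if $-b/a\le -d/c$.
   Context: A polynomial is real-rooted if all its zeros are real. *)

From HB Require Import structures.
From mathcomp Require Import all_boot all_order all_algebra.
Set Implicit Arguments. Unset Strict Implicit. Unset Printing Implicit Defensive.
Import Order.TTheory GRing.Theory Num.Theory.
Local Open Scope ring_scope.

Fixpoint Wpair (C : numClosedFieldType) (a b c d : C) (n : nat)
  : {poly C} * {poly C} :=
  match n with
  | 0%N => (1, 'X)
  | n'.+1 =>
      let: (p, q) := Wpair a b c d n' in
      (q, (a *: 'X + b%:P) * q + (c *: 'X + d%:P) * p)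
  end.

Definition W (C : numClosedFieldType) (a b c d : C) (n : nat) : {poly C} :=
  (Wpair a b c d n).1.

Definition real_rooted (C : numClosedFieldType) (p : {poly C}) : Prop :=
  forall z : C, root p z -> z \is Num.real.

From HB Require Import structures.
From mathcomp Require Import all_boot all_order all_algebra.
From mathcomp Require Import ring.
Import Order.TTheory GRing.Theory Num.Theory.
Set Implicit Arguments. Unset Strict Implicit. Unset Printing Implicit Defensive.
Local Open Scope ring_scope.

(* Write r = -b/a and s = -d/c.

   If r <= s, fix z with Im z > 0 and put mu = a (z - s).  Then
   a z + b = mu + eps and c z + d = k mu with eps = a (s - r) >= 0 and
   k = c/a > 0, so the ratios rho_n = W_{n+1}(z) / W_n(z) satisfy
   rho_{n+1} = mu + k mu / rho_n + eps.  The sector of the upper half plane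
   lying below the ray through mu is stable under w |-> mu / w,
   w |-> mu + k w and w |-> w + eps, and contains rho_0 = z; hence no W_n
   vanishes off the real axis.

   If r > s, then B = c r + d > 0 and W_n > 0 on [r, +oo), so a real-rooted
   W_n(x + r) is l * prod (x + t_i) with l > 0 and all t_i > 0.  Its first
   four coefficients e_0..e_3 then satisfy
   e_1^2 e_2 + 3 e_0 e_1 e_3 - 4 e_0 e_2^2 >= 0, a Cauchy-Schwarz
   inequality for the power sums of the 1/t_i.  Solving the recurrence for
   e_0..e_3 along n = 2m and n = 2m + 1 shows that this quantity is
   B^(3m - 4) times a polynomial in m.  According to the signs of B - r^2
   and c + a r - 2 r, one of these two polynomials has a negative leading
   coefficient, which contradicts the inequality for large m. *)

Lemma nat_ind2 (P : nat -> Prop) : P 0%N -> P 1%N ->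
  (forall n, P n -> P n.+1 -> P n.+2) -> forall n, P n.
Proof.
move=> P0 P1 PS n; suff: P n /\ P n.+1 by case.
by elim: n => [|n [IHn IHn1]]; split => //; apply: PS.
Qed.

Section Recurrence.
Variables (C : numClosedFieldType) (a b c d : C).

Lemma W0 : W a b c d 0 = 1. Proof. by []. Qed.
Lemma W1 : W a b c d 1 = 'X. Proof. by []. Qed.

Lemma W_rec n : W a b c d n.+2 =
  (a *: 'X + b%:P) * W a b c d n.+1 + (c *: 'X + d%:P) * W a b c d n.
Proof. by rewrite /W /=; case: (Wpair a b c d n). Qed.

Lemma hornerW_rec n z : (W a b c d n.+2).[z] =
  (a * z + b) * (W a b c d n.+1).[z] + (c * z + d) * (W a b c d n).[z].
Proof. by rewrite W_rec !hornerE. Qed.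

Lemma hornerW_conjC n z :
  a \is Num.real -> b \is Num.real -> c \is Num.real -> d \is Num.real ->
  (W a b c d n).[z^*] = ((W a b c d n).[z])^*.
Proof.
move=> aR bR cR dR; elim/nat_ind2: n => [||n IHn IHn1].
- by rewrite W0 !hornerE rmorph1.
- by rewrite W1 !hornerE.
rewrite !hornerW_rec IHn IHn1 !(rmorphD, rmorphM) /=.
by rewrite (conj_Creal aR) (conj_Creal bR) (conj_Creal cR) (conj_Creal dR).
Qed.

End Recurrence.

Section Sector.
Variable C : numClosedFieldType.

Definition sector (mu w : C) := 0 < 'Im w /\ 'Im (mu^* * w) < 0.

Lemma Im_gt0_neq0 (w : C) : 0 < 'Im w -> w != 0.
Proof. by apply: contraTneq => ->; rewrite raddf0 ltxx. Qed.

Variable mu : C.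
Hypothesis Imu_gt0 : 0 < 'Im mu.

Lemma sector_div w : sector mu w -> sector mu (mu / w).
Proof.
move=> [Iw_gt0 Imuw_lt0]; have w_neq0 := Im_gt0_neq0 Iw_gt0.
have mu_neq0 := Im_gt0_neq0 Imu_gt0.
have nw_gt0 : 0 < `|w| ^- 2 by rewrite invr_gt0 exprn_gt0 ?normr_gt0.
have nmu_gt0 : 0 < `|mu| ^+ 2 by rewrite exprn_gt0 ?normr_gt0.
split.
  rewrite invC_norm mulrCA ImMl ?gtr0_real // mulr_gt0 //.
  have -> : mu * w^* = (mu^* * w)^* by rewrite rmorphM /= conjCK.
  by rewrite Im_conj oppr_gt0.
rewrite mulrA (mulrC _ mu) -normCK ImMl ?rpredX ?normr_real //.
by rewrite ImV mulrA pmulr_llt0 // mulrN oppr_lt0 mulr_gt0.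
Qed.

Lemma sector_add_scale w k : 0 < k -> sector mu w -> sector mu (mu + k * w).
Proof.
move=> k_gt0 [Iw_gt0 Imuw_lt0]; have kR := gtr0_real k_gt0.
split; first by rewrite raddfD /= ImMl // addr_gt0 // mulr_gt0.
have Imumu : 'Im (mu^* * mu) = 0.
  by apply/Creal_ImP; rewrite mulrC -normCK rpredX // normr_real.
by rewrite mulrDr raddfD /= Imumu add0r mulrCA ImMl // pmulr_rlt0.
Qed.

Lemma sector_add_nonneg w e : 0 <= e -> sector mu w -> sector mu (w + e).
Proof.
move=> e_ge0 [Iw_gt0 Imuw_lt0]; have eR := ger0_real e_ge0.
have Ie : 'Im e = 0 by apply/Creal_ImP.
split; first by rewrite raddfD /= Ie addr0.
rewrite mulrDr raddfD /= [_ * e]mulrC (ImMl eR) Im_conj mulrN subr_lt0.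
by apply: lt_le_trans Imuw_lt0 _; rewrite mulr_ge0 // ltW.
Qed.

End Sector.

Section Sufficiency.
Variables (C : numClosedFieldType) (a b c d : C).
Hypotheses (aR : a \is Num.real) (bR : b \is Num.real)
  (cR : c \is Num.real) (dR : d \is Num.real)
  (a_gt0 : 0 < a) (c_gt0 : 0 < c) (d_lt0 : d < 0).
Hypothesis r_le_s : - b / a <= - d / c.

Lemma hornerW_neq0_Im_gt0 z n : 0 < 'Im z -> (W a b c d n).[z] != 0.
Proof.
move=> Iz_gt0.
have [a_neq0 c_neq0] : a != 0 /\ c != 0 by rewrite !gt_eqF.
set s := - d / c; set r := - b / a.
have sR : s \is Num.real by rewrite !(rpredM, rpredN, rpredV).
have s_gt0 : 0 < s by rewrite mulr_gt0 ?oppr_gt0 ?invr_gt0.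
pose mu := a * (z - s); pose eps := a * (s - r); pose k := c / a.
have Imu_gt0 : 0 < 'Im mu.
  by rewrite ImMl // raddfB /= (Creal_ImP _ sR) subr0 mulr_gt0.
have eps_ge0 : 0 <= eps by apply: mulr_ge0; [exact: ltW | rewrite subr_ge0].
have k_gt0 : 0 < k by rewrite mulr_gt0 ?invr_gt0.
have linA : a * z + b = mu + eps by rewrite /mu /eps /s /r; field; rewrite a_neq0.
have linC : c * z + d = k * mu by rewrite /mu /k /s; field; rewrite ?a_neq0 ?c_neq0.
suff ratio_sector : forall n, (W a b c d n).[z] != 0 /\
    sector mu ((W a b c d n.+1).[z] / (W a b c d n).[z]) by case: (ratio_sector n).
elim=> [|{}n [Wn_neq0 rho_sector]].
  rewrite W0 W1 !hornerE divr1; split; first exact: oner_neq0.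
  split => //; rewrite rmorphM /= (conj_Creal aR) -mulrA ImMl // pmulr_rlt0 //.
  rewrite rmorphB /= (conj_Creal sR) mulrBl raddfB /= mulrC -normCK.
  rewrite (Creal_ImP _ (rpredX _ (normr_real _))) ImMl //.
  by rewrite sub0r oppr_lt0 mulr_gt0.
have Wn1_neq0 : (W a b c d n.+1).[z] != 0.
  by have := Im_gt0_neq0 rho_sector.1; rewrite mulf_eq0 negb_or => /andP[].
split => //; rewrite hornerW_rec linA linC.
have -> : ((mu + eps) * (W a b c d n.+1).[z] + k * mu * (W a b c d n).[z])
    / (W a b c d n.+1).[z] =
  (mu + k * (mu / ((W a b c d n.+1).[z] / (W a b c d n).[z]))) + eps.
  by field; rewrite Wn_neq0 Wn1_neq0.
exact/sector_add_nonneg/sector_add_scale/sector_div.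
Qed.

Lemma W_real_rooted n : real_rooted (W a b c d n).
Proof.
move=> z /rootP Wz0; case: (real_ltgtP (Creal_Im z) (real0 _)) => [Iz_lt0|Iz_gt0|].
- have := @hornerW_neq0_Im_gt0 z^* n; rewrite Im_conj oppr_gt0 => /(_ Iz_lt0).
  by rewrite hornerW_conjC // Wz0 rmorph0 eqxx.
- by have := hornerW_neq0_Im_gt0 n Iz_gt0; rewrite Wz0 eqxx.
- by move/Creal_ImP.
Qed.

End Sufficiency.

Section NewtonForm.
Variable F : numFieldType.

Definition newton_form (e : nat -> F) :=
  e 1%N ^+ 2 * e 2%N + 3 * e 0%N * e 1%N * e 3%N - 4 * e 0%N * e 2%N ^+ 2.

Lemma newton_form_scale (e f : nat -> F) s t : t != 0 ->
    (forall k, (k < 4)%N -> e k = s * f k / t ^+ k) ->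
  newton_form e = s ^+ 3 / t ^+ 4 * newton_form f.
Proof.
move=> t_neq0 ef; rewrite /newton_form !ef //.
by rewrite ?exprS ?expr0; field; rewrite t_neq0.
Qed.

(* P1, P2, P3 are the power sums of the 1/t, t in ts; the quadratic form in v
   is sum_t t^-1 (t^-1 - v)^2, which carries the induction for
   P1 P3 >= P2^2. *)
Lemma coef_prod_XaddC_power_sums (ts : seq F) : {in ts, forall t, 0 < t} ->
  exists P1 P2 P3 : F,
  let Q := \prod_(t <- ts) ('X + t%:P) in
  [/\ 0 < Q`_0, Q`_1 = Q`_0 * P1, Q`_2 = Q`_0 * (P1 ^+ 2 - P2) / 2,
     Q`_3 = Q`_0 * (P1 ^+ 3 - 3 * P1 * P2 + 2 * P3) / 6 &
     0 <= P1 * P3 - P2 ^+ 2 /\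
     forall v, v \is Num.real -> 0 <= P3 - 2 * v * P2 + v ^+ 2 * P1].
Proof.
elim: ts => [|t ts IHts] ts_gt0.
  exists 0, 0, 0; rewrite /= big_nil !coef1 /=.
  split; rewrite ?ltr01 //; try by field.
  split; first by rewrite mulr0 expr0n subr0.
  by move=> v _; rewrite !mulr0 subr0 addr0.
have t_gt0 : 0 < t by apply: ts_gt0; rewrite mem_head.
have [|P1 [P2 [P3 /= [Q0_gt0 Q1E Q2E Q3E [CS sq_ge0]]]]] := IHts.
  by move=> x x_ts; apply: ts_gt0; rewrite in_cons x_ts orbT.
set Q := \prod_(_ <- _) _ in Q0_gt0 Q1E Q2E Q3E.
set u := t^-1; have u_gt0 : 0 < u by rewrite invr_gt0.
have t_neq0 : t != 0 by rewrite gt_eqF.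
exists (P1 + u), (P2 + u ^+ 2), (P3 + u ^+ 3).
have coefE k : (('X + t%:P) * Q)`_k = (if k is k'.+1 then Q`_k' else 0) + t * Q`_k.
  by rewrite mulrDl coefD coefXM coefCM; case: k.
rewrite /= big_cons -/Q !coefE add0r.
split; first by rewrite mulr_gt0.
- by rewrite Q1E /u; field.
- by rewrite Q1E Q2E /u; field.
- by rewrite Q2E Q3E /u; field.
split=> [|v vR].
  have -> : (P1 + u) * (P3 + u ^+ 3) - (P2 + u ^+ 2) ^+ 2 =
      (P1 * P3 - P2 ^+ 2) + u * (P3 - 2 * u * P2 + u ^+ 2 * P1) by ring.
  by apply: addr_ge0 => //; apply: mulr_ge0; [exact: ltW | exact/sq_ge0/gtr0_real].
have -> : P3 + u ^+ 3 - 2 * v * (P2 + u ^+ 2) + v ^+ 2 * (P1 + u) =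
    (P3 - 2 * v * P2 + v ^+ 2 * P1) + u * (u - v) ^+ 2 by ring.
apply: addr_ge0; first exact: sq_ge0.
apply: mulr_ge0; first exact: ltW.
by apply: real_exprn_even_ge0 => //; apply: realB => //; apply: gtr0_real.
Qed.

Lemma newton_form_prod_XaddC (ts : seq F) : {in ts, forall t, 0 < t} ->
  let Q := \prod_(t <- ts) ('X + t%:P) in 0 < Q`_0 /\ 0 <= newton_form (nth 0 Q).
Proof.
move=> /coef_prod_XaddC_power_sums [P1 [P2 [P3 /= [Q0_gt0 Q1E Q2E Q3E [CS _]]]]].
split=> //; rewrite /newton_form Q1E Q2E Q3E.
set Q0 := _`_0 in Q0_gt0 *.
have -> : (Q0 * P1) ^+ 2 * (Q0 * (P1 ^+ 2 - P2) / 2) +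
    3 * Q0 * (Q0 * P1) * (Q0 * (P1 ^+ 3 - 3 * P1 * P2 + 2 * P3) / 6) -
    4 * Q0 * (Q0 * (P1 ^+ 2 - P2) / 2) ^+ 2 = Q0 ^+ 3 * (P1 * P3 - P2 ^+ 2).
  by field.
by rewrite mulr_ge0 // exprn_ge0 // ltW.
Qed.

End NewtonForm.

Section EventuallyNegative.
Variable R : archiNumFieldType.

Lemma exists_nat_lin_lt0 (p1 p0 : R) : p1 < 0 -> p0 \is Num.real ->
  exists n : nat, (0 < n)%N /\ p1 * n%:R + p0 < 0.
Proof.
move=> p1_lt0 p0R; have np1_gt0 : 0 < - p1 by rewrite oppr_gt0.
pose x := `|p0| / - p1; have x_ge0 : 0 <= x by rewrite divr_ge0 // ltW.
exists (Num.Def.archi_bound x).+1; split => //.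
set N := _%:R; have x_lt_N : x < N.
  by apply: lt_le_trans (archi_boundP x_ge0) _; rewrite ler_nat.
have norm_lt : `|p0| < - p1 * N.
  have -> : `|p0| = - p1 * x by rewrite /x mulrC divfK ?gt_eqF.
  by rewrite ltr_pM2l.
rewrite addrC -(opprK (p1 * N)) subr_lt0 -mulNr.
exact: le_lt_trans (real_ler_norm p0R) norm_lt.
Qed.

Lemma ler_norm_mulXn (p x : R) k j : p \is Num.real -> 1 <= x -> (k <= j)%N ->
  p * x ^+ k <= `|p| * x ^+ j.
Proof.
move=> pR x_ge1 le_kj; have x_ge0 : 0 <= x := le_trans ler01 x_ge1.
apply: (@le_trans _ _ (`|p| * x ^+ k)).
  by rewrite ler_wpM2r ?exprn_ge0 ?real_ler_norm.
by rewrite ler_wpM2l // ler_weXn2l.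
Qed.

Lemma exists_nat_quad_lt0 (p2 p1 p0 : R) :
  p2 < 0 -> p1 \is Num.real -> p0 \is Num.real ->
  exists n : nat, (0 < n)%N /\ p2 * n%:R ^+ 2 + p1 * n%:R + p0 < 0.
Proof.
move=> p2_lt0 p1R p0R.
have [n [n_gt0 lin_lt0]] :=
  exists_nat_lin_lt0 p2_lt0 (rpredD (normr_real p1) (normr_real p0)).
exists n; split => //; have n_ge1 : 1 <= n%:R :> R by rewrite ler1n.
apply: (@le_lt_trans _ _ (n%:R * (p2 * n%:R + (`|p1| + `|p0|)))); last first.
  by rewrite pmulr_rlt0 ?ltr0n.
have -> : n%:R * (p2 * n%:R + (`|p1| + `|p0|)) =
    p2 * n%:R ^+ 2 + `|p1| * n%:R + `|p0| * n%:R by ring.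
rewrite lerD ?lerD //; first by have := ler_norm_mulXn p1R n_ge1 (leqnn 1); rewrite expr1.
by have := ler_norm_mulXn p0R n_ge1 (leq0n 1); rewrite expr0 mulr1 expr1.
Qed.

Lemma exists_nat_cubic_lt0 (p3 p2 p1 p0 : R) :
  p3 < 0 -> p2 \is Num.real -> p1 \is Num.real -> p0 \is Num.real ->
  exists n : nat, (0 < n)%N /\ p3 * n%:R ^+ 3 + p2 * n%:R ^+ 2 + p1 * n%:R + p0 < 0.
Proof.
move=> p3_lt0 p2R p1R p0R.
have [n [n_gt0 lin_lt0]] := exists_nat_lin_lt0 p3_lt0
  (rpredD (rpredD (normr_real p2) (normr_real p1)) (normr_real p0)).
exists n; split => //; have n_ge1 : 1 <= n%:R :> R by rewrite ler1n.
apply: (@le_lt_trans _ _ (n%:R ^+ 2 * (p3 * n%:R + (`|p2| + `|p1| + `|p0|))));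
  last by rewrite pmulr_rlt0 ?exprn_gt0 ?ltr0n.
have -> : n%:R ^+ 2 * (p3 * n%:R + (`|p2| + `|p1| + `|p0|)) = p3 * n%:R ^+ 3
    + `|p2| * n%:R ^+ 2 + `|p1| * n%:R ^+ 2 + `|p0| * n%:R ^+ 2 by ring.
rewrite !lerD ?ler_norm_mulXn //.
  by have := ler_norm_mulXn p1R n_ge1 (isT : (1 <= 2)%N); rewrite expr1.
by have := ler_norm_mulXn p0R n_ge1 (leq0n 2); rewrite expr0 mulr1.
Qed.

End EventuallyNegative.

Section Necessity.
Variables (C : archiClosedFieldType) (a b c d : C).
Hypotheses (aR : a \is Num.real) (bR : b \is Num.real)
  (cR : c \is Num.real) (dR : d \is Num.real)
  (a_gt0 : 0 < a) (c_gt0 : 0 < c) (b_lt0 : b < 0) (d_lt0 : d < 0).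
Hypothesis s_lt_r : - d / c < - b / a.

Local Notation r := (- b / a).
Local Notation B := (c * r + d).

Let a_neq0 : a != 0. Proof. by rewrite gt_eqF. Qed.
Let c_neq0 : c != 0. Proof. by rewrite gt_eqF. Qed.
Let rR : r \is Num.real. Proof. by rewrite !(rpredM, rpredN, rpredV). Qed.
Let BR : B \is Num.real. Proof. by rewrite !(rpredD, rpredM, rpredN, rpredV). Qed.
Let r_gt0 : 0 < r. Proof. by rewrite mulr_gt0 ?oppr_gt0 ?invr_gt0. Qed.
Let B_gt0 : 0 < B.
Proof.
have -> : B = c * (r - - d / c) by field; rewrite c_neq0.
by rewrite mulr_gt0 // subr_gt0.
Qed.
Let B_neq0 : B != 0. Proof. by rewrite gt_eqF. Qed.
Let aB_neq0 : c * - b + d * a != 0.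
Proof.
have -> : c * - b + d * a = a * B by field; rewrite a_neq0.
by rewrite mulf_neq0.
Qed.

Local Ltac side := rewrite ?B_neq0 ?aB_neq0 ?a_neq0 ?c_neq0 ?pnatr_eq0.

Definition Wsh n := W a b c d n \Po ('X + r%:P).
Definition e k n := (Wsh n)`_k.

Lemma Wsh_rec n : Wsh n.+2 = (a *: 'X) * Wsh n.+1 + (B%:P + c *: 'X) * Wsh n.
Proof.
have ar_b : a * r + b = 0 by field; rewrite a_neq0.
rewrite /Wsh W_rec comp_polyD !comp_polyM !comp_polyD !comp_polyZ comp_polyX.
rewrite !comp_polyC !scalerDr -!mul_polyC -!polyCM; congr (_ * _ + _ * _).
  by rewrite -addrA -polyCD ar_b addr0.
by rewrite -addrA -polyCD addrC.
Qed.

Lemma e0_rec n : e 0 n.+2 = B * e 0 n.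
Proof.
rewrite /e Wsh_rec coefD -scalerAl coefZ coefXM mulr0 add0r mulrDl coefD.
by rewrite coefCM -scalerAl coefZ coefXM mulr0 addr0.
Qed.

Lemma eS_rec k n : e k.+1 n.+2 = a * e k n.+1 + B * e k.+1 n + c * e k n.
Proof.
rewrite /e Wsh_rec coefD -scalerAl coefZ coefXM /= mulrDl coefD.
by rewrite coefCM -scalerAl coefZ coefXM /= addrA.
Qed.

Lemma e_W0 k : e k 0 = (k == 0%N)%:R.
Proof. by rewrite /e /Wsh W0 -polyC1 comp_polyC polyC1 coef1. Qed.

Lemma e_W1 k : e k 1 = if k == 0%N then r else (k == 1%N)%:R.
Proof.
rewrite /e /Wsh W1 comp_polyX coefD coefX coefC.
by case: k => [|[|k]] /=; rewrite ?add0r ?addr0.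
Qed.

(* Found by solving the recurrences e0_rec and eS_rec, which are triangular
   in k, separately along even and odd n. *)
Definition e_even (k : nat) (x : C) : C :=
  match k with
  | 0 => 1
  | 1 => x * (c + a * r)
  | 2 => x ^+ 2 * (c ^+ 2 / 2 + a * c * r + a ^+ 2 * B / 2)
         + x * (- c ^+ 2 / 2 + a * B - a * c * r - a ^+ 2 * B / 2)
  | _ => x ^+ 3 * (c ^+ 3 / 6 + a * c ^+ 2 * r / 2 + a ^+ 2 * c * B / 2 + a ^+ 3 * r * B / 6)
         + x ^+ 2 * (- c ^+ 3 / 2 + a * c * B - 3 / 2 * a * c ^+ 2 * r - a ^+ 2 * c * B)
         + x * (c ^+ 3 / 3 - a * c * B + a * c ^+ 2 * r + a ^+ 2 * c * B / 2 - a ^+ 3 * r * B / 6)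
  end.

Definition e_odd (k : nat) (x : C) : C :=
  match k with
  | 0 => r
  | 1 => x * (c * r + a * B) + B
  | 2 => x ^+ 2 * (c ^+ 2 * r / 2 + a * c * B + a ^+ 2 * r * B / 2)
         + x * (c * B - c ^+ 2 * r / 2 + a ^+ 2 * r * B / 2)
  | _ => x ^+ 3 * (c ^+ 3 * r / 6 + a * c ^+ 2 * B / 2 + a ^+ 2 * c * r * B / 2 + a ^+ 3 * B ^+ 2 / 6)
         + x ^+ 2 * (c ^+ 2 * B / 2 - c ^+ 3 * r / 2 - a * c ^+ 2 * B / 2 + a ^+ 2 * B ^+ 2 / 2)
         + x * (- c ^+ 2 * B / 2 + c ^+ 3 * r / 3 + a ^+ 2 * B ^+ 2 / 2 - a ^+ 2 * c * r * B / 2 - a ^+ 3 * B ^+ 2 / 6)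
  end.

Lemma e_closed_form m k : (k < 4)%N ->
  e k m.*2 = B ^+ m * e_even k m%:R / B ^+ k /\
  e k m.*2.+1 = B ^+ m * e_odd k m%:R / B ^+ k.
Proof.
elim: m k => [|m IHm] k lt_k4.
  by case: k lt_k4 => [|[|[|[|k]]]] // _; rewrite /= e_W0 e_W1 /=;
    split; rewrite ?exprS ?expr0; field; side.
have even_step : forall k, (k < 4)%N ->
    e k (m.+1).*2 = B ^+ m.+1 * e_even k m.+1%:R / B ^+ k.
  move=> {lt_k4}k; case: k => [|[|[|[|k]]]] // _; rewrite doubleS.
  - by rewrite e0_rec (IHm 0%N _).1 //; rewrite ?exprS ?expr0; field; side.
  - rewrite eS_rec (IHm 0%N _).2 // (IHm 0%N _).1 // (IHm 1%N _).1 // -natr1.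
    by rewrite /e_even /e_odd ?exprS ?expr0; field; side.
  - rewrite eS_rec (IHm 1%N _).2 // (IHm 1%N _).1 // (IHm 2%N _).1 // -natr1.
    by rewrite /e_even /e_odd ?exprS ?expr0; field; side.
  - rewrite eS_rec (IHm 2%N _).2 // (IHm 2%N _).1 // (IHm 3%N _).1 // -natr1.
    by rewrite /e_even /e_odd ?exprS ?expr0; field; side.
split; first exact: even_step.
case: k lt_k4 => [|[|[|[|k]]]] // _; rewrite doubleS.
- by rewrite e0_rec (IHm 0%N _).2 //; rewrite ?exprS ?expr0; field; side.
- rewrite eS_rec -doubleS (even_step 0%N) // (IHm 0%N _).2 // (IHm 1%N _).2 // -natr1.
  by rewrite /e_even /e_odd ?exprS ?expr0; field; side.
- rewrite eS_rec -doubleS (even_step 1%N) // (IHm 1%N _).2 // (IHm 2%N _).2 // -natr1.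
  by rewrite /e_even /e_odd ?exprS ?expr0; field; side.
- rewrite eS_rec -doubleS (even_step 2%N) // (IHm 2%N _).2 // (IHm 3%N _).2 // -natr1.
  by rewrite /e_even /e_odd ?exprS ?expr0; field; side.
Qed.

(* The coefficients, as polynomials in m, of newton_form (e_even^~ m) and
   newton_form (e_odd^~ m); they are kept as functions of c and B because
   the degenerate cases specialise B to r^2 and c to (2 - a) r. *)
Definition qe4 (cv Bv : C) := a ^+ 3 * (r ^+ 2 - Bv) * (cv * r + a * Bv).
Definition qe3 (cv Bv : C) := -3 * a^+2 * cv * r * Bv + 1/2 * a^+2 * cv^+2 * Bv
  + a^+2 * cv^+2 * r^+2 - 4 * a^+3 * Bv^+2 + a^+3 * r^+2 * Bv
  + 4 * a^+3 * cv * r * Bv - a^+3 * cv * r^+3 + 2 * a^+4 * Bv^+2 - 1/2 * a^+4 * r^+2 * Bv.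
Definition qe2 (cv Bv : C) := a * cv^+2 * Bv - 4 * a^+2 * Bv^+2 + 5 * a^+2 * cv * r * Bv
  - 1/2 * a^+2 * cv^+2 * Bv - a^+2 * cv^+2 * r^+2 + 4 * a^+3 * Bv^+2
  - 3 * a^+3 * cv * r * Bv - a^+4 * Bv^+2 - 1/2 * a^+4 * r^+2 * Bv.
Definition qo4 (cv Bv : C) := a ^+ 3 * Bv ^+ 2 * (Bv - r ^+ 2) * (cv + a * r).
Definition qo3 (cv Bv : C) := 3 * a^+2 * cv * Bv^+3 - 2 * a^+2 * cv^+2 * r * Bv^+2
  + 1/2 * a^+2 * cv^+2 * r^+3 * Bv + 3 * a^+3 * r * Bv^+3 - 3 * a^+3 * cv * r^+2 * Bv^+2
  + 1/2 * a^+4 * r * Bv^+3 - 2 * a^+4 * r^+3 * Bv^+2.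
Definition qo2 (cv Bv : C) := 3 * a * cv * Bv^+3 - 4 * a * cv^+2 * r * Bv^+2
  + a * cv^+3 * r^+2 * Bv + 2 * a^+2 * r * Bv^+3 - 3/2 * a^+2 * cv * r^+2 * Bv^+2
  + 1/2 * a^+2 * cv^+2 * r^+3 * Bv + 5/2 * a^+3 * r * Bv^+3 - 2 * a^+3 * cv * r^+2 * Bv^+2
  - 1/2 * a^+4 * r * Bv^+3 - a^+4 * r^+3 * Bv^+2.
Definition qo1 (cv Bv : C) := cv * Bv^+3 - 2 * cv^+2 * r * Bv^+2 + cv^+3 * r^+2 * Bv
  + 2 * a^+2 * r * Bv^+3 - 3/2 * a^+2 * cv * r^+2 * Bv^+2 - 1/2 * a^+3 * r * Bv^+3.

Lemma newton_form_e_even x : newton_form (e_even^~ x) =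
  x ^+ 2 * (qe4 c B * x ^+ 2 + qe3 c B * x + qe2 c B).
Proof. by rewrite /newton_form /e_even /qe4 /qe3 /qe2; field; side. Qed.

Lemma newton_form_e_odd x : newton_form (e_odd^~ x) =
  x * (qo4 c B * x ^+ 3 + qo3 c B * x ^+ 2 + qo2 c B * x + qo1 c B).
Proof. by rewrite /newton_form /e_odd /qo4 /qo3 /qo2 /qo1; field; side. Qed.

Lemma qe4_sqr_r : qe4 c (r ^+ 2) = 0.
Proof. by rewrite /qe4; field; side. Qed.

Lemma qo4_sqr_r : qo4 c (r ^+ 2) = 0.
Proof. by rewrite /qo4; field; side. Qed.

Lemma qe3_sqr_r : qe3 c (r ^+ 2) =
  3/2 * a ^+ 2 * r ^+ 2 * (c + a * r) * (c + a * r - 2 * r).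
Proof. by rewrite /qe3; field; side. Qed.

Lemma qo3_sqr_r : qo3 c (r ^+ 2) =
  - (3/2 * a ^+ 2 * r ^+ 5 * (c + a * r) * (c + a * r - 2 * r)).
Proof. by rewrite /qo3; field; side. Qed.

Lemma qo2_sqr_r : qo2 ((2 - a) * r) (r ^+ 2) = - (2 * a * (1 - a) * r ^+ 7).
Proof. by rewrite /qo2; field; side. Qed.

Lemma hornerW_gt0 x n : x \is Num.real -> r <= x -> 0 < (W a b c d n).[x].
Proof.
move=> xR r_le_x; elim/nat_ind2: n => [||n Wn_gt0 Wn1_gt0].
- by rewrite W0 hornerE ltr01.
- by rewrite W1 hornerX (lt_le_trans r_gt0).
have xr_ge0 : 0 <= x - r by rewrite subr_ge0.
have ax_b : a * x + b = a * (x - r) by field; rewrite a_neq0.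
have cx_d : c * x + d = c * (x - r) + B by field; rewrite a_neq0.
rewrite hornerW_rec ax_b cx_d ltr_wpDl //.
  by rewrite !mulr_ge0 // ltW.
by rewrite mulr_gt0 // ltr_wpDl // mulr_ge0 // ltW.
Qed.

Lemma newton_form_e_ge0 n : real_rooted (W a b c d n) -> 0 <= newton_form (e^~ n).
Proof.
move=> Wn_rr; have [zs Wn_prod] := closed_field_poly_normal (W a b c d n).
set l := lead_coef _ in Wn_prod.
have Wr_gt0 : 0 < (W a b c d n).[r] := hornerW_gt0 n rR (lexx r).
have l_neq0 : l != 0.
  by rewrite lead_coef_eq0; apply: contraTneq Wr_gt0 => ->; rewrite horner0 ltxx.
have zs_lt_r z : z \in zs -> 0 < r - z.
  move=> z_zs; have Wz0 : root (W a b c d n) z.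
    by rewrite Wn_prod rootZ // root_prod_XsubC.
  have zR := Wn_rr z Wz0.
  rewrite subr_gt0 real_ltNge //; apply/negP => r_le_z.
  by have := hornerW_gt0 n zR r_le_z; rewrite (rootP Wz0) ltxx.
have Wsh_prod : Wsh n = l *: \prod_(t <- map (fun z => r - z) zs) ('X + t%:P).
  rewrite /Wsh {1}Wn_prod comp_polyZ big_map; congr (_ *: _).
  elim: zs {Wn_prod zs_lt_r} => [|z zs IHzs].
    by rewrite !big_nil -polyC1 comp_polyC.
  by rewrite !big_cons comp_polyM IHzs comp_polyB comp_polyX comp_polyC polyCB addrA.
have [|Q0_gt0 newton_Q_ge0] := newton_form_prod_XaddC (ts := map (fun z => r - z) zs).
  by move=> t /mapP [z z_zs ->]; apply: zs_lt_r.
set Q := \prod_(_ <- _) _ in Wsh_prod Q0_gt0 newton_Q_ge0.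
have eE k : e k n = l * Q`_k by rewrite /e Wsh_prod coefZ.
have l_gt0 : 0 < l.
  by rewrite -(pmulr_lgt0 _ Q0_gt0) -eE /e -horner_coef0 /Wsh horner_comp !hornerE.
have -> : newton_form (e^~ n) = l ^+ 3 * newton_form (nth 0 Q).
  by rewrite /newton_form !eE; ring.
by rewrite mulr_ge0 // exprn_ge0 // ltW.
Qed.

Local Ltac real_tac :=
  rewrite !(rpredD, rpredB, rpredN, rpredM, rpredV, rpredX, rpred_nat, rpred1).

Local Ltac positivity := repeat first [ assumption | apply: mulr_gt0
  | apply: addr_gt0 | apply: exprn_gt0 | rewrite invr_gt0 | rewrite ltr0n ].

Hypothesis W_rr : forall n, real_rooted (W a b c d n).

Lemma newton_form_e_even_ge0 m : 0 <= newton_form (e_even^~ m%:R).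
Proof.
have := newton_form_e_ge0 (@W_rr m.*2).
rewrite (newton_form_scale (f := e_even^~ m%:R) (s := B ^+ m) B_neq0);
  last by move=> k /(e_closed_form m) [].
by rewrite pmulr_rge0 // divr_gt0 ?exprn_gt0.
Qed.

Lemma newton_form_e_odd_ge0 m : 0 <= newton_form (e_odd^~ m%:R).
Proof.
have := newton_form_e_ge0 (@W_rr m.*2.+1).
rewrite (newton_form_scale (f := e_odd^~ m%:R) (s := B ^+ m) B_neq0);
  last by move=> k /(e_closed_form m) [].
by rewrite pmulr_rge0 // divr_gt0 ?exprn_gt0.
Qed.

Lemma B_le_sqr_r : B <= r ^+ 2.
Proof.
rewrite real_leNgt ?rpredX //; apply/negP => r2_lt_B.
have qe4_lt0 : qe4 c B < 0.
  have crB_gt0 : 0 < c * r + a * B by rewrite addr_gt0 // mulr_gt0.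
  by rewrite /qe4 (pmulr_llt0 _ crB_gt0) pmulr_rlt0 ?exprn_gt0 // subr_lt0.
have qe3R : qe3 c B \is Num.real by rewrite /qe3; real_tac.
have qe2R : qe2 c B \is Num.real by rewrite /qe2; real_tac.
have [n [n_gt0 q_lt0]] := exists_nat_quad_lt0 qe4_lt0 qe3R qe2R.
have := newton_form_e_even_ge0 n.
by rewrite newton_form_e_even pmulr_rge0 ?exprn_gt0 ?ltr0n // => /(lt_le_trans q_lt0); rewrite ltxx.
Qed.

Lemma sqr_r_le_B : r ^+ 2 <= B.
Proof.
rewrite real_leNgt ?rpredX //; apply/negP => B_lt_r2.
have qo4_lt0 : qo4 c B < 0.
  have car_gt0 : 0 < c + a * r by rewrite addr_gt0 // mulr_gt0.
  by rewrite /qo4 (pmulr_llt0 _ car_gt0) pmulr_rlt0 ?mulr_gt0 ?exprn_gt0 // subr_lt0.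
have qo3R : qo3 c B \is Num.real by rewrite /qo3; real_tac.
have qo2R : qo2 c B \is Num.real by rewrite /qo2; real_tac.
have qo1R : qo1 c B \is Num.real by rewrite /qo1; real_tac.
have [n [n_gt0 q_lt0]] := exists_nat_cubic_lt0 qo4_lt0 qo3R qo2R qo1R.
have := newton_form_e_odd_ge0 n.
by rewrite newton_form_e_odd pmulr_rge0 ?ltr0n // => /(lt_le_trans q_lt0); rewrite ltxx.
Qed.

Let B_sqr_r : B = r ^+ 2.
Proof. by apply/le_anti; rewrite B_le_sqr_r sqr_r_le_B. Qed.

Let YR : c + a * r - 2 * r \is Num.real. Proof. by real_tac. Qed.

Lemma c_ar_sub_2r_ge0 : 0 <= c + a * r - 2 * r.
Proof.
rewrite real_leNgt //; apply/negP => Y_lt0.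
have qe3_lt0 : qe3 c (r ^+ 2) < 0.
  have coef_gt0 : 0 < 3/2 * a ^+ 2 * r ^+ 2 * (c + a * r) by positivity.
  by rewrite qe3_sqr_r (pmulr_rlt0 _ coef_gt0).
have qe2R : qe2 c (r ^+ 2) \is Num.real by rewrite /qe2; real_tac.
have [n [n_gt0 q_lt0]] := exists_nat_lin_lt0 qe3_lt0 qe2R.
have := newton_form_e_even_ge0 n.
rewrite newton_form_e_even B_sqr_r qe4_sqr_r mul0r add0r.
by rewrite pmulr_rge0 ?exprn_gt0 ?ltr0n // => /(lt_le_trans q_lt0); rewrite ltxx.
Qed.

Lemma c_ar_sub_2r_le0 : c + a * r - 2 * r <= 0.
Proof.
rewrite real_leNgt //; apply/negP => Y_gt0.
have qo3_lt0 : qo3 c (r ^+ 2) < 0.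
  have coef_gt0 : 0 < 3/2 * a ^+ 2 * r ^+ 5 * (c + a * r) * (c + a * r - 2 * r).
    by positivity.
  by rewrite qo3_sqr_r oppr_lt0.
have qo2R : qo2 c (r ^+ 2) \is Num.real by rewrite /qo2; real_tac.
have qo1R : qo1 c (r ^+ 2) \is Num.real by rewrite /qo1; real_tac.
have [n [n_gt0 q_lt0]] := exists_nat_quad_lt0 qo3_lt0 qo2R qo1R.
have := newton_form_e_odd_ge0 n.
rewrite newton_form_e_odd B_sqr_r qo4_sqr_r mul0r add0r.
by rewrite pmulr_rge0 ?ltr0n // => /(lt_le_trans q_lt0); rewrite ltxx.
Qed.

Lemma not_W_real_rooted : False.
Proof.
have Y0 : c + a * r - 2 * r = 0.
  by apply/le_anti; rewrite c_ar_sub_2r_le0 c_ar_sub_2r_ge0.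
have cE : c = (2 - a) * r by rewrite -[c]subr0 -Y0; ring.
have r_lt_c : r < c.
  have : r ^+ 2 < c * r.
    rewrite -B_sqr_r -subr_gt0.
    have -> : c * r - (c * r + d) = - d by ring.
    by rewrite oppr_gt0.
  by rewrite expr2 ltr_pM2r.
have a_lt1 : 0 < 1 - a.
  rewrite -(pmulr_lgt0 _ r_gt0).
  have -> : (1 - a) * r = c - r by rewrite [c]cE; ring.
  by rewrite subr_gt0.
have qo2_lt0 : qo2 c (r ^+ 2) < 0.
  have coef_gt0 : 0 < 2 * a * (1 - a) * r ^+ 7 by positivity.
  by rewrite [in qo2 c]cE qo2_sqr_r oppr_lt0.
have qo1R : qo1 c (r ^+ 2) \is Num.real by rewrite /qo1; real_tac.
have [n [n_gt0 q_lt0]] := exists_nat_lin_lt0 qo2_lt0 qo1R.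
have qo3_0 : qo3 c (r ^+ 2) = 0 by rewrite qo3_sqr_r Y0 mulr0 oppr0.
have := newton_form_e_odd_ge0 n.
rewrite newton_form_e_odd B_sqr_r qo4_sqr_r qo3_0 !mul0r !add0r.
by rewrite pmulr_rge0 ?ltr0n // => /(lt_le_trans q_lt0); rewrite ltxx.
Qed.

End Necessity.

Theorem theorem3p1 (C : archiClosedFieldType) (a b c d : C)
  (ha : a \is Num.real) (hb : b \is Num.real)
  (hc : c \is Num.real) (hd : d \is Num.real)
  (ha0 : 0 < a) (hc0 : 0 < c) (hb0 : b < 0) (hd0 : d < 0) :
  (forall n : nat, real_rooted (W a b c d n)) <-> - b / a <= - d / c.
Proof.
split=> [W_rr | r_le_s n]; last exact: W_real_rooted.
have [rR sR] : - b / a \is Num.real /\ - d / c \is Num.real.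
  by split; rewrite !(rpredM, rpredN, rpredV).
rewrite real_leNgt //; apply/negP => s_lt_r.
exact: not_W_real_rooted ha hb hc hd ha0 hc0 hb0 hd0 s_lt_r W_rr.
Qed.
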